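(* Let $G$ be a connected threshold graph with binary string $b=0^{s_1}1^{t_1}\cdots 0^{s_k}1^{t_k}$ (all $s_i,t_i\geq 1$). Let $m=2k$ if $s_1=1$ and $m=2k+1$ if $s_1\geq 2$. Then the anti-regular graph $A_m$ is an induced subgraph of $G$, and in either case $A_m$ is the largest anti-regular graph contained in $G$ as an induced subgraph.
   Context: Threshold graphs from binary strings: given $b=b_1b_2\cdots b_n\in\{0,1\}^n$ with $b_1=0$, let $G_1$ be a single vertex, and for $j=2,\ldots,n$ obtain $G_j$ from $G_{j-1}$ by adding a new vertex which is adjacent to all previous vertices if $b_j=1$ and isolated if $b_j=0$; $G(b)=G_n$ and $b$ is called the binary string of $G(b)$. The notation $0^{s}$ (resp. $1^t$) denotes $s$ consecutive zeros (resp. $t$ consecutive ones). The anti-regular graph $A_m$ is $G(b)$ with $b=0101\cdots01$ (length $m$) when $m$ is even and $b=00101\cdots01$ (length $m$) when $m$ is odd. *)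

From mathcomp Require Import all_boot.
Set Implicit Arguments. Unset Strict Implicit. Unset Printing Implicit Defensive.

(* Threshold graph G(b) of a binary string b (true = 1, false = 0) on the
   vertex set 'I_(size b): vertex j (0-indexed, j-th added vertex) is
   adjacent to all earlier vertices iff b_j = 1.  So for i <> j, i ~ j iff
   the bit of the later of the two vertices, b_(max i j), is 1. *)
Definition thr_adj (b : seq bool) : rel 'I_(size b) :=
  fun i j => (i != j) && nth false b (maxn i j).
Arguments thr_adj b : clear implicits.

(* Binary string of the anti-regular graph A_m:
   m even: 0101...01 ; m odd: 00101...01 (0-indexed bits). *)
Definition antireg_string (m : nat) : seq bool :=
  if odd m then mkseq (fun i => (0 < i) && ~~ odd i) m
  else mkseq (fun i => odd i) m.

Definition antireg_adj (m : nat) : rel 'I_(size (antireg_string m)) :=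
  thr_adj (antireg_string m).
Arguments antireg_adj m : clear implicits.

Definition induced_sub (V W : finType) (eH : rel V) (eG : rel W) : Prop :=
  exists f : V -> W, injective f /\ forall x y, eH x y = eG (f x) (f y).

Definition block_string (s t : seq nat) : seq bool :=
  flatten [seq nseq p.1 false ++ nseq p.2 true | p <- zip s t].

(* Vertices p < q of G(b) are twins (they have the same neighbours outside {p, q})
   as soon as b is constant on [max(p,1), q].  Hence the vertices of G(b) fall into
   at most c + 1 twin classes, where c is the number of changes between consecutive
   bits of b_1 ... b_(n-1).  Twins are reflected by induced embeddings, and the
   string of A_m alternates from position 1 on, so no two of the vertices 1, ..., m-1
   of A_m are twins; thus m <= c + 2, which is 2k or 2k + 1 for the block string b.
   Conversely, G(c') is an induced subgraph of G(b) whenever c' is a subsequence of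
   b, and the string of A_m is one: take one bit from each block, plus a second
   leading 0 when s_1 >= 2. *)

From mathcomp Require Import all_boot zify.

Lemma thr_adj_sym (b : seq bool) : symmetric (thr_adj b).
Proof. by move=> i j; rewrite /thr_adj eq_sym maxnC. Qed.

Lemma thr_adj_ltn [b : seq bool] [i j : 'I_(size b)] :
  i < j -> thr_adj b i j = nth false b j.
Proof. by move=> ij; rewrite /thr_adj neq_ltn ij (maxn_idPr (ltnW ij)). Qed.

Lemma induced_sub_thr_subseq (c b : seq bool) :
  subseq c b -> induced_sub (thr_adj c) (thr_adj b).
Proof.
case/subseqP=> msk _ def_c.
pose idx := mask msk (iota 0 (size b)).
have idx_sorted : sorted ltn idx := sorted_mask ltn_trans msk (iota_ltn_sorted 0 _).
have map_idx : map (nth false b) idx = c.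
  by rewrite map_mask def_c; congr mask; exact: mkseq_nth.
have size_idx : size idx = size c by rewrite -map_idx size_map.
have idx_in_b : all (gtn (size b)) idx.
  by apply/allP=> i /mem_mask; rewrite mem_iota.
clearbody idx.
have idx_lt (x : 'I_(size c)) : nth 0 idx x < size b.
  by apply: (allP idx_in_b); rewrite mem_nth // size_idx.
have nth_idx x : x < size c -> nth false c x = nth false b (nth 0 idx x).
  by move=> x_lt; rewrite -map_idx (nth_map 0) ?size_idx.
have idx_ltn (x y : 'I_(size c)) : x < y -> nth 0 idx x < nth 0 idx y.
  by apply: (sorted_ltn_nth ltn_trans 0 idx_sorted); rewrite inE size_idx.
pose f (x : 'I_(size c)) : 'I_(size b) := Ordinal (idx_lt x).
have f_ltn (x y : 'I_(size c)) : x < y -> f x < f y := idx_ltn x y.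
exists f; split.
  move=> x y [eq_xy].
  by case: (ltngtP x y) => [/f_ltn | /f_ltn | /val_inj //]; rewrite /= eq_xy ltnn.
move=> x y; case: (ltngtP x y) => [xy | yx | /val_inj ->].
- by rewrite (thr_adj_ltn xy) (thr_adj_ltn (f_ltn _ _ xy)) nth_idx.
- rewrite thr_adj_sym [RHS]thr_adj_sym.
  by rewrite (thr_adj_ltn yx) (thr_adj_ltn (f_ltn _ _ yx)) nth_idx.
- by rewrite /thr_adj !eqxx.
Qed.

Fixpoint changes (l : seq bool) : nat :=
  if l is x :: l' then (x != head x l') + changes l' else 0.

Definition changes_in (b : seq bool) (m n : nat) : nat :=
  \sum_(m <= w < n) (nth false b w != nth false b w.+1).

Lemma changesE l : changes l = changes_in l 0 (size l).-1.
Proof.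
rewrite /changes_in; elim: l => [|x l IH]; first by rewrite big_geq.
case: l IH => [|y l] IH; first by rewrite big_geq //= eqxx.
transitivity ((x != y) + changes (y :: l)) => //.
by rewrite IH big_nat_recl.
Qed.

Lemma changes_behead b : changes (behead b) = changes_in b 1 (size b).-1.
Proof.
rewrite changesE /changes_in big_add1 size_behead.
by apply: eq_bigr => w _; rewrite !nth_behead.
Qed.

Lemma changes_in_split b m [p n] : p <= n ->
  changes_in b m n = changes_in b m p + changes_in b (maxn p m) n.
Proof.
move=> pn; rewrite /changes_in; case: (leqP p m) => [pm | mp].
  by rewrite (big_geq pm).
by rewrite -big_cat_nat // ltnW.
Qed.

Lemma changes_in_eq0 b m n : changes_in b m n = 0 ->
  forall w, m <= w <= n -> nth false b w = nth false b n.
Proof.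
elim: n => [|n IH] no_change w /andP[mw wn]; first by case: w mw wn.
case: (ltnP w n.+1) wn => [w_le _ | w_ge wn]; last by have -> : w = n.+1 by lia.
have mn : m <= n := leq_trans mw w_le.
move: no_change; rewrite /changes_in big_nat_recr //= => /eqP.
rewrite addn_eq0 eqb0 negbK => /andP[/eqP no_change /eqP <-].
by apply: IH; rewrite ?mw.
Qed.

Definition twins {V : finType} (e : rel V) (x y : V) : Prop :=
  forall w, w != x -> w != y -> e x w = e y w.

Lemma twins_sym [V : finType] [e : rel V] [x y : V] : twins e x y -> twins e y x.
Proof. by move=> tw w wy wx; rewrite tw. Qed.

Lemma induced_sub_twins [V W : finType] [eH : rel V] [eG : rel W] [f : V -> W]
    [x y : V] :
  injective f -> (forall x y, eH x y = eG (f x) (f y)) ->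
  twins eG (f x) (f y) -> twins eH x y.
Proof. by move=> f_inj f_adj tw w wx wy; rewrite !f_adj tw ?(inj_eq f_inj). Qed.

Lemma thr_twins (b : seq bool) (p q : 'I_(size b)) : p <= q ->
  (forall w, maxn p 1 <= w <= q -> nth false b w = nth false b q) ->
  twins (thr_adj b) p q.
Proof.
move=> pq const w; rewrite -!val_eqE /= => wp wq.
have [wp' | pw] := ltnP w p.
  by rewrite ![thr_adj b _ w]thr_adj_sym !thr_adj_ltn ?const //; lia.
have [wq' | qw] := ltnP w q.
  by rewrite thr_adj_ltn ?[thr_adj b q w]thr_adj_sym ?thr_adj_ltn ?const //; lia.
by rewrite !thr_adj_ltn //; lia.
Qed.

Lemma thr_twins_changes_in (b : seq bool) (p q : 'I_(size b)) :
  changes_in b 1 p = changes_in b 1 q -> twins (thr_adj b) p q.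
Proof.
wlog pq : p q / p <= q.
  move=> wlog_pq eq_pq; have [pq | /ltnW qp] := leqP p q; first exact: wlog_pq.
  exact/twins_sym/wlog_pq.
rewrite (changes_in_split b 1 pq) -{1}[changes_in b 1 p]addn0.
by move=> /addnI/esym/changes_in_eq0 const; exact: (thr_twins b p q pq const).
Qed.

Lemma alternating_thr_no_twins [c : seq bool] [x y : 'I_(size c)] :
  (forall w, 0 < w -> w.+1 < size c -> nth false c w != nth false c w.+1) ->
  0 < x -> x < y -> ~ twins (thr_adj c) x y.
Proof.
move=> alt x_gt0 xy tw.
have y_lt := ltn_ord y.
have separated (w : 'I_(size c)) : w != x -> w != y ->
    thr_adj c x w != thr_adj c y w -> False.
  by move=> wx wy; rewrite tw ?eqxx.
(* The vertex y - 1, or 0 when y = x + 1, tells x and y apart. *)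
have [x1y | yx1] := ltnP x.+1 y.
  have w_lt : y.-1 < size c by lia.
  apply: (separated (Ordinal w_lt)); rewrite -?val_eqE /=; try lia.
  rewrite thr_adj_ltn /=; last by lia.
  rewrite thr_adj_sym thr_adj_ltn /=; last by lia.
  by have := alt y.-1; rewrite prednK; [apply; lia | lia].
have w_lt : 0 < size c by lia.
apply: (separated (Ordinal w_lt)); rewrite -?val_eqE /=; try lia.
rewrite (thr_adj_sym c x) (thr_adj_sym c y) !thr_adj_ltn //=; try lia.
have -> : nat_of_ord y = x.+1 by lia.
by apply: alt; lia.
Qed.

Lemma thr_induced_sub_size [c b : seq bool] :
  (forall w, 0 < w -> w.+1 < size c -> nth false c w != nth false c w.+1) ->
  induced_sub (thr_adj c) (thr_adj b) -> size c <= (changes (behead b)).+2.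
Proof.
move=> alt [f [f_inj f_adj]].
pose r (x : 'I_(size c)) := changes_in b 1 (f x).
have r_le x : r x <= changes (behead b).
  have fx_le : f x <= (size b).-1 by have := ltn_ord (f x); lia.
  by rewrite changes_behead (changes_in_split b 1 fx_le) leq_addr.
have r_inj (x y : 'I_(size c)) : 0 < x -> 0 < y -> r x = r y -> x = y.
  move=> x_gt0 y_gt0 /thr_twins_changes_in /(induced_sub_twins f_inj f_adj) tw.
  case: (ltngtP x y) => [xy | yx | /val_inj //].
  - by case: (alternating_thr_no_twins alt x_gt0 xy).
  - by case: (alternating_thr_no_twins alt y_gt0 yx (twins_sym tw)).
(* Vertex 0 may be a twin of vertex 1, so it gets a slot of its own. *)
pose g (x : 'I_(size c)) : 'I_(changes (behead b)).+2 :=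
  if x == 0 :> nat then ord0 else inord (r x).+1.
have g_val (x : 'I_(size c)) : g x = (if x == 0 :> nat then 0 else (r x).+1) :> nat.
  by rewrite /g; case: eqP => //= _; rewrite inordK // !ltnS.
have g_inj : injective g.
  move=> x y /(congr1 val) /=; rewrite !g_val.
  case: (posnP x) => [x0 | x_gt0]; case: (posnP y) => [y0 | y_gt0] //=.
    by move=> _; apply: val_inj; rewrite /= x0 y0.
  by case=> /r_inj; apply.
by have := leq_card g g_inj; rewrite !card_ord.
Qed.

Lemma size_antireg_string m : size (antireg_string m) = m.
Proof. by rewrite /antireg_string; case: odd; rewrite size_mkseq. Qed.

Lemma antireg_string_alt m w : 0 < w -> w.+1 < size (antireg_string m) ->
  nth false (antireg_string m) w != nth false (antireg_string m) w.+1.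
Proof.
rewrite size_antireg_string /antireg_string => w_gt0 w_lt.
by case: odd; rewrite !nth_mkseq ?(ltnW w_lt) //= ?w_gt0; case: odd.
Qed.

Lemma antireg_string_double k : antireg_string k.*2 = flatten (nseq k [:: false; true]).
Proof.
rewrite /antireg_string odd_double; elim: k => // k IH.
rewrite doubleS /= -IH /mkseq /= (iotaDl 2 0) -map_comp.
by congr [:: _, _ & _]; apply: eq_map => i /=; rewrite negbK.
Qed.

Lemma antireg_string_double_succ k :
  antireg_string k.*2.+1 = false :: antireg_string k.*2.
Proof.
rewrite /antireg_string /= odd_double /mkseq /= (iotaDl 1 0) -map_comp.
by congr (_ :: _); apply: eq_map => i /=; rewrite negbK.
Qed.

Lemma changes_nseq_cat n x l :
  changes (nseq n.+1 x ++ l) = (x != head x l) + changes l.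
Proof. by elim: n => // n /= ->; rewrite eqxx. Qed.

Lemma changes_nseq n x : changes (nseq n x) = 0.
Proof.
elim: n => // n IH; rewrite /= IH addn0.
by case: n {IH} => [|n] /=; rewrite eqxx.
Qed.

Lemma block_string_cons a b s t :
  block_string (a :: s) (b :: t) = nseq a false ++ nseq b true ++ block_string s t.
Proof. by rewrite /block_string /= catA. Qed.

Lemma block_string_consS a b s t :
  block_string (a.+1 :: s) (b :: t) = false :: block_string (a :: s) (b :: t).
Proof. by rewrite !block_string_cons. Qed.

Lemma changes_block_string a s t :
  size t = (size s).+1 -> all (fun x => 0 < x) s -> all (fun x => 0 < x) t ->
  changes (block_string (a :: s) t) = (size s).*2.+1 - (a == 0).
Proof.
elim: s a t => [|a' s IH] a [|[|b] t] //= [size_t] s_pos t_pos.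
  case: t size_t {t_pos} => // _; rewrite block_string_cons [block_string _ _]/= cats0.
  by case: a => [|a]; rewrite ?changes_nseq_cat changes_nseq.
case/andP: s_pos; case: a' => // a' _ s_pos.
case: t size_t t_pos => // b' t size_t t_pos.
have IHs := IH a'.+1 (b' :: t) size_t s_pos t_pos.
have head_bs : head true (block_string (a'.+1 :: s) (b' :: t)) = false.
  by rewrite block_string_consS.
rewrite block_string_cons.
by case: a => [|a]; rewrite !changes_nseq_cat head_bs IHs //=; lia.
Qed.

Lemma antireg_string_subseq s t :
  size s = size t -> all (fun x => 0 < x) s -> all (fun x => 0 < x) t ->
  subseq (antireg_string (size s).*2) (block_string s t).
Proof.
rewrite antireg_string_double.
elim: s t => [|a s IH] [|b t] //= [size_t] /andP[a_gt0 s_pos] /andP[b_gt0 t_pos].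
rewrite block_string_cons -[[:: false, true & _]]/([:: false] ++ [:: true] ++ _).
by rewrite !cat_subseq ?IH // sub1seq mem_nseq eqxx ?a_gt0 ?b_gt0.
Qed.

Theorem theorem3p2 (k : nat) (s t : seq nat) :
  0 < k -> size s = k -> size t = k ->
  all (fun x => 0 < x) s -> all (fun x => 0 < x) t ->
  (forall x y : 'I_(size (block_string s t)),
      connect (thr_adj (block_string s t)) x y) ->
  let m := if nth 0 s 0 == 1 then k.*2 else k.*2.+1 in
  induced_sub (antireg_adj m) (thr_adj (block_string s t)) /\
  (forall m', induced_sub (antireg_adj m') (thr_adj (block_string s t)) ->
      m' <= m).
Proof.
(* Connectivity is automatic: the last bit of b is 1 since t_k > 0. *)
move=> k_gt0 size_s size_t s_pos t_pos _ m; rewrite {}/m.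
case: s size_s s_pos => [|[|a] s'] size_s //; first by rewrite -size_s in k_gt0.
case/andP=> _ s'_pos.
case: t size_t t_pos => [|b t'] size_t t_pos; first by rewrite -size_t in k_gt0.
have size_st : size (a.+1 :: s') = size (b :: t') by rewrite size_s size_t.
have changes_tail : changes (behead (block_string (a.+1 :: s') (b :: t'))) =
    (size s').*2.+1 - (a == 0).
  by rewrite block_string_consS; apply: changes_block_string => //; case: size_st.
rewrite -size_s [nth _ _ _]/= eqSS.
split=> [|m' /(thr_induced_sub_size (@antireg_string_alt m'))]; last first.
  by rewrite size_antireg_string changes_tail; case: (a == 0) => /=; lia.
rewrite /antireg_adj; apply: induced_sub_thr_subseq.
case: a {size_s changes_tail} size_st => [|a] size_st; first exact: antireg_string_subseq.
rewrite antireg_string_double_succ block_string_consS (subseq_cat2l [:: false]).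
exact: (antireg_string_subseq (a.+1 :: s')).
Qed.
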